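(* Let $\sigma$ be the map $\sigma^a(R)=hR^aJ(g;R)$, $\sigma^N(R)=A(g;R)J(g;R)$, let $\sigma^q_p=\partial\sigma^q/\partial R^p$, and for $R$ with $q(R)>0$ put $t=\sigma(R)$, $S(t)=\sqrt{r_{rs}t^rt^s}$, $L^p=t^p/S(t)$, $L_p=r_{pq}L^q$. Then $$n^{rs}:=\sigma^r_p\,\sigma^s_q\,g^{pq}(g;R)=h^2r^{rs}+\tfrac14g^2L^rL^s,$$ its inverse is $$n_{rs}=\frac1{h^2}r_{rs}-\frac14G^2L_rL_s,$$ and $\det(n_{rs})=h^{2(1-N)}\det(r_{ab})$.
   Context: Let $N\ge2$, $V_N=\mathbb{R}^N$ with points $R=(R^1,\dots,R^N)$, $Z=R^N$; indices $a,b$ run over $1,\dots,N-1$, $p,q,r,s$ over $1,\dots,N$, repeated indices summed. Fix a symmetric positive-definite matrix $(r_{ab})$, $q(R)=\sqrt{r_{ab}R^aR^b}$, and let $r_{pq}$ be the $N\times N$ matrix with $r_{NN}=1$, $r_{Na}=0$ and entries $r_{ab}$, with inverse $r^{pq}$. Fix $g\in(-2,2)$, $h=\sqrt{1-g^2/4}$, $G=g/h$. Define $B(g;R)=Z^2+gqZ+q^2$, $A(g;R)=Z+\frac12gq$, $\Phi(g;R)=\arctan(A/(hq))$ for $q>0$ ($\Phi=\pm\pi/2$ if $q=0$, $Z\gtrless0$), $J(g;R)=e^{\frac12G\Phi}$, the Finsleroid metric function $K(g;R)=\sqrt{B}\,J$, the Finsler metric tensor $g_{pq}=\frac12\partial^2K^2/\partial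 R^p\partial R^q$ and its inverse $g^{pq}$. *)

From HB Require Import structures.
From mathcomp Require Import all_boot all_order all_algebra.
From mathcomp Require Import all_classical all_reals all_analysis.
Set Implicit Arguments. Unset Strict Implicit. Unset Printing Implicit Defensive.
Import Order.TTheory GRing.Theory Num.Theory.
Import numFieldNormedType.Exports.
Local Open Scope ring_scope.

(* Dimension N = n.+1 (N >= 2 means 0 < n). Coordinates R^1..R^N are the
   entries x 0 p, p : 'I_n.+1; R^N = Z is the entry at ord_max, and the
   index a in 1..N-1 corresponds to lift ord_max a, a : 'I_n. *)
Section Finsleroid.
Variables (R : realType) (n : nat) (r : 'M[R]_n) (g : R).

Definition hh : R := Num.sqrt (1 - g ^+ 2 / 4).
Definition GG : R := g / hh.

Definition rfull : 'M[R]_n.+1 := \matrix_(p, q)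
  match unlift ord_max p, unlift ord_max q with
  | Some a, Some b => r a b
  | None, None => 1
  | _, _ => 0
  end.

Definition Zc (x : 'rV[R]_n.+1) : R := x 0 ord_max.
Definition qq (x : 'rV[R]_n.+1) : R :=
  Num.sqrt (\sum_(a < n) \sum_(b < n)
              r a b * x 0 (lift ord_max a) * x 0 (lift ord_max b)).
Definition BB (x : 'rV[R]_n.+1) : R := Zc x ^+ 2 + g * qq x * Zc x + qq x ^+ 2.
Definition AA (x : 'rV[R]_n.+1) : R := Zc x + g * qq x / 2.
Definition PhiF (x : 'rV[R]_n.+1) : R :=
  if 0 < qq x then atan (AA x / (hh * qq x))
  else if 0 < Zc x then pi / 2 else - (pi / 2).
Definition JJ (x : 'rV[R]_n.+1) : R := expR (GG * PhiF x / 2).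
Definition KK (x : 'rV[R]_n.+1) : R := Num.sqrt (BB x) * JJ x.

Definition pd (f : 'rV[R]_n.+1 -> R) (p : 'I_n.+1) (x : 'rV[R]_n.+1) : R :=
  derive f x (delta_mx 0 p).

Definition gmet (x : 'rV[R]_n.+1) : 'M[R]_n.+1 :=
  \matrix_(p, q) (pd (pd (fun y => KK y ^+ 2) q) p x / 2).
Definition ginv (x : 'rV[R]_n.+1) : 'M[R]_n.+1 := invmx (gmet x).

(* the map sigma and its Jacobian sigma^q_p (row q, column p) *)
Definition sigma (x : 'rV[R]_n.+1) : 'rV[R]_n.+1 :=
  \row_p (if p == ord_max then AA x * JJ x else hh * x 0 p * JJ x).
Definition sigJac (x : 'rV[R]_n.+1) : 'M[R]_n.+1 :=
  \matrix_(q, p) pd (fun y => sigma y 0 q) p x.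

Definition nup (x : 'rV[R]_n.+1) : 'M[R]_n.+1 :=
  sigJac x *m ginv x *m (sigJac x)^T.

Definition St (t : 'rV[R]_n.+1) : R := Num.sqrt ((t *m rfull *m t^T) 0 0).
Definition Lup (x : 'rV[R]_n.+1) : 'rV[R]_n.+1 := (St (sigma x))^-1 *: sigma x.
Definition Llow (x : 'rV[R]_n.+1) : 'rV[R]_n.+1 := Lup x *m rfull.

End Finsleroid.

From HB Require Import structures.
From mathcomp Require Import all_boot all_order all_algebra.
From mathcomp Require Import all_classical all_reals all_analysis.
From mathcomp Require Import ring lra.
Set Implicit Arguments. Unset Strict Implicit. Unset Printing Implicit Defensive.
Import Order.TTheory GRing.Theory Num.Theory.
Import numFieldNormedType.Exports.
Local Open Scope ring_scope.

(* Write <u, w> = u (rfull r) w^T, e = e_N and y = R - Z e for the spatial part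
   of R, so that q^2 = <y, y> and K^2 = J^2 B = <sigma, sigma>.  The first
   derivatives of q, A, Phi, J and K^2 all lie in the span of <y, .> and <e, .>,
   so the Jacobian of sigma is a rank-two perturbation h J 1 + y^T a + e^T b of a
   scalar matrix; Weinstein-Aronszajn reduces its determinant to a 2 x 2 one, equal
   to h^n J^(n+1).  Differentiating K^2 once more, the Hessian identity
   g_pq = sigma^r_p sigma^s_q n_rs becomes a rational identity in a handful of
   scalars, and the relation h^2 + g^2/4 = 1 is made rational by parametrising the
   circle.  Hence n^rs = D (D^T n D)^-1 D^T = n^-1, where D is the Jacobian;
   Sherman-Morrison inverts n because <L, L> = 1, and the same determinant
   identity gives det n. *)

Section DirectionalDerivatives.
Variables (R : realType) (V : normedModType R).
Implicit Types (f : V -> R) (x v : V).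

Lemma is_derive_lineP f x v df :
  is_derive x v f df <-> is_derive (0 : R) 1 (fun t : R => f (t *: v + x)) df.
Proof.
have DE : 'D_v f x = 'D_1 (fun t : R => f (t *: v + x)) 0.
  rewrite /derive; set g1 := fun h => h^-1 *: _; set g2 := fun h => h^-1 *: _.
  suff -> : g1 = g2 by [].
  by apply/funext => h; rewrite /g1 /g2 /= addr0 scale0r add0r [_%:A]mulr1.
split=> -[d1 d2].
  by apply: DeriveDef; [exact: (derivable1P _ _ _).1 | rewrite -DE].
by apply: DeriveDef; [exact: (derivable1P _ _ _).2 | rewrite DE].
Qed.

Lemma is_derive_chain f (h : R -> R) x v df dh :
  is_derive x v f df -> is_derive (f x) 1 h dh ->
  is_derive x v (fun y => h (f y)) (dh * df).
Proof.
move=> /is_derive_lineP fd hd; apply/is_derive_lineP.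
by apply: is_derive1_comp => //; rewrite scale0r add0r.
Qed.

Lemma is_derive_near_line f f' x v df :
  (\forall t \near (0 : R), f (t *: v + x) = f' (t *: v + x)) ->
  is_derive x v f df -> is_derive x v f' df.
Proof. by move=> ff' /is_derive_lineP fd; apply/is_derive_lineP/(near_eq_is_derive ff'). Qed.

Lemma is_derive_gt0_near_line f x v df :
  is_derive x v f df -> 0 < f x -> \forall t \near (0 : R), 0 < f (t *: v + x).
Proof.
move=> /is_derive_lineP [/derivable1_diffP/differentiable_continuous fc _] fx.
by apply: (cvgr_gt _ fc); rewrite scale0r add0r.
Qed.

Lemma is_derive_affine1 (a c : R) : is_derive (0 : R) 1 (fun t : R => t * a + c) a.
Proof.
have Did : is_derive (0 : R) 1 (fun t : R => t) 1 := is_derive_id _ _.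
have Da : is_derive (0 : R) 1 (fun _ : R => a) 0 := is_derive_cst _ _ _.
have Dc : is_derive (0 : R) 1 (fun _ : R => c) 0 := is_derive_cst _ _ _.
apply: is_derive_eq (is_deriveD (is_deriveM Did Da) Dc) _.
by rewrite /GRing.scale /=; ring.
Qed.

Lemma is_derive_linear f x v :
  (forall a u w, f (a *: u + w) = a * f u + f w) -> is_derive x v f (f v).
Proof.
move=> flin; apply/is_derive_lineP.
have -> : (fun t : R => f (t *: v + x)) = (fun t => t * f v + f x).
  by apply/funext => t; rewrite flin.
exact: is_derive_affine1.
Qed.

Lemma is_derive_quadratic (b : V -> V -> R) x v :
  (forall a u u' w, b (a *: u + u') w = a * b u w + b u' w) ->
  (forall a u w w', b u (a *: w + w') = a * b u w + b u w') ->
  is_derive x v (fun y => b y y) (b v x + b x v).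
Proof.
move=> bl br; apply/is_derive_lineP.
have -> : (fun t : R => b (t *: v + x) (t *: v + x)) =
          (fun t => t * (t * b v v + (b v x + b x v)) + b x x).
  by apply/funext => t; rewrite bl !br; ring.
have Did : is_derive (0 : R) 1 (fun t : R => t) 1 := is_derive_id _ _.
have Dd : is_derive (0 : R) 1 (fun _ : R => b x x) 0 := is_derive_cst _ _ _.
apply: is_derive_eq (is_deriveD (is_deriveM Did (is_derive_affine1 _ _)) Dd) _.
by rewrite /GRing.scale /=; ring.
Qed.

Lemma is_derive_const (c : R) x v : is_derive x v (fun _ : V => c) 0.
Proof. exact: is_derive_cst. Qed.

Lemma is_derive_mul f f' x v df df' :
  is_derive x v f df -> is_derive x v f' df' ->
  is_derive x v (fun y => f y * f' y) (f x * df' + f' x * df).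
Proof. exact: is_deriveM. Qed.

Lemma is_derive_inv f x v df :
  is_derive x v f df -> f x != 0 ->
  is_derive x v (fun y => (f y)^-1) (- (f x) ^- 2 * df).
Proof. by move=> [fd <-] fx0; apply: DeriveDef; [exact: derivableV | exact: deriveV]. Qed.

End DirectionalDerivatives.

Section MatrixIdentities.
Variable F : fieldType.

Lemma det1B_mulmxC m k (U : 'M[F]_(m, k)) (V : 'M[F]_(k, m)) :
  \det (1%:M - U *m V) = \det (1%:M - V *m U).
Proof.
have E : block_mx (1%:M - U *m V) U 0 1%:M *m block_mx 1%:M 0 V 1%:M
       = block_mx 1%:M 0 V 1%:M *m block_mx 1%:M U 0 (1%:M - V *m U).
  rewrite !mulmx_block !mulmx1 !mul1mx !mul0mx !mulmx0 !addr0 !add0r.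
  by rewrite subrK addrC subrK.
have := congr1 determinant E.
by rewrite !det_mulmx !det_ublock !det_lblock !det1 !mul1r !mulr1.
Qed.

Lemma det_scalar_addmulmxC m k (c : F) (U : 'M[F]_(m, k)) (V : 'M[F]_(k, m)) :
  c != 0 -> \det (c%:M + U *m V) * c ^+ k = \det (c%:M + V *m U) * c ^+ m.
Proof.
move=> c0.
have scaleE p (P : 'M[F]_p) : c%:M + P = c *: (1%:M - (- c^-1) *: P).
  by rewrite scalerBr scalemx1 scalerA mulrN divff // scaleN1r opprK.
rewrite !scaleE !detZ scalemxAl det1B_mulmxC -scalemxAr.
by ring.
Qed.

Lemma det_mx22 (M : 'M[F]_2) : \det M = M 0 0 * M 1 1 - M 0 1 * M 1 0.
Proof.
rewrite (expand_det_row _ 0) !big_ord_recl big_ord0 addr0 /cofactor !det_mx11.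
rewrite !mxE /= expr0 expr1 !mul1r mulN1r mulrN.
by congr (_ * M _ _ - M _ _ * M _ _); apply: val_inj.
Qed.

Lemma det_block_mx11 (a b c d : 'M[F]_1) :
  \det (block_mx a b c d) = a 0 0 * d 0 0 - b 0 0 * c 0 0.
Proof.
rewrite det_mx22.
have -> : (0 : 'I_2) = lshift 1 (0 : 'I_1) by apply: val_inj.
have -> : (1 : 'I_2) = rshift 1 (0 : 'I_1) by apply: val_inj.
by rewrite (block_mxEul a b c d 0 0) (block_mxEur a b c d 0 0)
           (block_mxEdl a b c d 0 0) (block_mxEdr a b c d 0 0).
Qed.

Lemma invmx_congruence m (S P : 'M[F]_m) :
  S \in unitmx -> P \in unitmx -> S *m invmx (S^T *m P *m S) *m S^T = invmx P.
Proof.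
move=> Su Pu; have STu : S^T \in unitmx by rewrite unitmx_tr.
have Qu : S^T *m P *m S \in unitmx by rewrite !unitmx_mul STu Pu Su.
have QX : S^T *m P *m S *m (invmx S *m invmx P *m invmx S^T) = 1%:M.
  by rewrite !mulmxA (mulmxK Su) (mulmxK Pu) (mulmxV STu).
have -> : invmx (S^T *m P *m S) = invmx S *m invmx P *m invmx S^T.
  by rewrite -[LHS]mulmx1 -QX mulmxA mulVmx // mul1mx.
by rewrite !mulmxA (mulmxV Su) mul1mx (mulmxKV STu).
Qed.

Lemma sherman_morrison_sym m (P : 'M[F]_m) (L : 'rV[F]_m) (c : F) :
  P \in unitmx -> P^T = P -> L *m P *m L^T = 1%:M -> 1 + c != 0 ->
  (P - (c / (1 + c)) *: ((L *m P)^T *m (L *m P))) *m (invmx P + c *: (L^T *m L))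
  = 1%:M.
Proof.
move=> Pu Psym LPL c1.
have PLL : P *m (L^T *m L) = (L *m P)^T *m L by rewrite trmx_mul Psym mulmxA.
have LLP : (L *m P)^T *m (L *m P) *m invmx P = (L *m P)^T *m L.
  by rewrite -mulmxA mulmxK.
have LLLL : (L *m P)^T *m (L *m P) *m (L^T *m L) = (L *m P)^T *m L.
  by rewrite mulmxA -(mulmxA _ (L *m P)) LPL mulmx1.
rewrite mulmxBl !mulmxDr -!scalemxAl -!scalemxAr !scalerA mulmxV // PLL LLP LLLL.
rewrite -scalerDl -addrA -scalerBl.
have -> : c - (c / (1 + c) + c / (1 + c) * c) = 0 by field.
by rewrite scale0r addr0.
Qed.

End MatrixIdentities.

Lemma posdef_det_neq0 (R : numFieldType) m (M : 'M[R]_m) :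
  (forall v : 'rV_m, v != 0 -> 0 < (v *m M *m v^T) 0 0) -> \det M != 0.
Proof.
by move=> Mpos; apply/det0P => -[v v0 vM]; have := Mpos v v0; rewrite vM mul0mx mxE ltxx.
Qed.

Section BilinearForm.
Variables (R : comRingType) (m : nat).
Implicit Types (M : 'M[R]_m) (u w : 'rV[R]_m).

Definition bil M u w : R := (u *m M *m w^T) 0 0.

Lemma bilDl M u u' w : bil M (u + u') w = bil M u w + bil M u' w.
Proof. by rewrite /bil !mulmxDl mxE. Qed.

Lemma bilZl M a u w : bil M (a *: u) w = a * bil M u w.
Proof. by rewrite /bil -!scalemxAl mxE. Qed.

Lemma bilDr M u w w' : bil M u (w + w') = bil M u w + bil M u w'.
Proof. by rewrite /bil linearD /= mulmxDr mxE. Qed.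

Lemma bilZr M a u w : bil M u (a *: w) = a * bil M u w.
Proof. by rewrite /bil linearZ /= -scalemxAr mxE. Qed.

Lemma bilDZl M a u u' w : bil M (a *: u + u') w = a * bil M u w + bil M u' w.
Proof. by rewrite bilDl bilZl. Qed.

Lemma bilDZr M a u w w' : bil M u (a *: w + w') = a * bil M u w + bil M u w'.
Proof. by rewrite bilDr bilZr. Qed.

Lemma bil_scalemxB a b M M' u w :
  bil (a *: M - b *: M') u w = a * bil M u w - b * bil M' u w.
Proof. by rewrite /bil mulmxBr mulmxBl -!scalemxAr -!scalemxAl !mxE. Qed.

Lemma bilC M u w : M^T = M -> bil M u w = bil M w u.
Proof.
move=> Msym; rewrite /bil.
have -> : w *m M *m u^T = (u *m M *m w^T)^T by rewrite !trmx_mul trmxK Msym mulmxA.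
by rewrite [RHS]mxE.
Qed.

Lemma bil_delta M i j : bil M (delta_mx 0 i) (delta_mx 0 j) = M i j.
Proof. by rewrite /bil -rowE trmx_delta -colE !mxE. Qed.

Lemma bil_congruence M (S : 'M[R]_m) i j :
  (S^T *m M *m S) i j = bil M (delta_mx 0 i *m S^T) (delta_mx 0 j *m S^T).
Proof. by rewrite -bil_delta /bil trmx_mul trmxK !mulmxA. Qed.

Lemma bil_deltar M u j : bil M u (delta_mx 0 j) = (u *m M) 0 j.
Proof. by rewrite /bil trmx_delta -colE mxE. Qed.

Lemma mul_tr_row_entry u w i j : (u^T *m w) i j = u 0 i * w 0 j.
Proof. by rewrite mxE big_ord1 mxE. Qed.

Lemma mx11_bil M u w : u *m M *m w^T = (bil M u w)%:M.
Proof. exact: mx11_scalar. Qed.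

Lemma mulmx_bil_scale M u w p (z : 'M[R]_(1, p)) : u *m M *m w^T *m z = bil M u w *: z.
Proof. by rewrite mx11_bil mul_scalar_mx. Qed.

Lemma bil_outer M (L : 'rV[R]_m) u w :
  M^T = M -> bil ((L *m M)^T *m (L *m M)) u w = bil M L u * bil M L w.
Proof.
move=> Msym; rewrite /bil trmx_mul Msym.
have -> : u *m (M *m L^T *m (L *m M)) *m w^T = (u *m M *m L^T) *m (L *m M *m w^T).
  by rewrite !mulmxA.
rewrite !mx11_bil mul_scalar_mx scale_scalar_mx !mxE eqxx !mulr1n.
by rewrite (bilC u L Msym).
Qed.

End BilinearForm.

Section Finsleroid.
Variables (R : realType) (n : nat) (r : 'M[R]_n) (g : R).
Hypotheses (r_sym : r^T = r) (g_bound : -2 < g < 2).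

Local Notation V := 'rV[R]_n.+1.
Local Notation N := (@ord_max n).
Local Notation e := (delta_mx 0 N : V).
Local Notation rf := (rfull r).
Local Notation h := (hh g).
Local Notation q := (qq r).
Local Notation A := (AA r g).
Local Notation B := (BB r g).
Local Notation J := (JJ r g).
Local Notation K := (KK r g).

Lemma rfull_tr : rf^T = rf.
Proof.
apply/matrixP => i j.
case: (unliftP N i) => [a ->|->]; case: (unliftP N j) => [b ->|->];
  rewrite /rfull !mxE ?liftK ?unlift_none //.
by rewrite -[in RHS]r_sym mxE.
Qed.

Lemma bil_rfullC u w : bil rf u w = bil rf w u.
Proof. exact/bilC/rfull_tr. Qed.

Lemma e_mulmx_rfull : e *m rf = e.
Proof.
apply/rowP => k; rewrite -rowE !mxE eqxx /=.
case: (unliftP N k) => [a ->|->]; rewrite ?unlift_none ?liftK ?eqxx //.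
by rewrite eq_sym (negbTE (neq_lift _ _)).
Qed.

Lemma bil_rfull_el w : bil rf e w = w 0 N.
Proof. by rewrite /bil e_mulmx_rfull -rowE !mxE. Qed.

Lemma bil_rfull_er u : bil rf u e = u 0 N.
Proof. by rewrite bil_rfullC bil_rfull_el. Qed.

Lemma det_rfull : \det rf = \det r.
Proof.
rewrite (expand_det_row _ N) (bigD1_ord N) //= big1 ?addr0; last first.
  by move=> a _; rewrite /rfull mxE unlift_none liftK mul0r.
rewrite /rfull mxE unlift_none mul1r /cofactor -signr_odd addnn odd_double expr0 mul1r.
by congr (\det _); apply/matrixP => a b; rewrite !mxE !liftK.
Qed.

Lemma qq_bil y : q y = Num.sqrt (bil rf y y - y 0 N ^+ 2).
Proof.
have yrfN : (y *m rf) 0 N = y 0 N.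
  by rewrite -bil_deltar bil_rfull_er.
have yrf a : (y *m rf) 0 (lift N a) = \sum_b y 0 (lift N b) * r b a.
  rewrite mxE (bigD1_ord N) //= /rfull mxE unlift_none liftK mulr0 add0r.
  by apply: eq_bigr => b _; rewrite mxE !liftK.
rewrite /qq; congr Num.sqrt; apply/eqP; rewrite eq_sym subr_eq; apply/eqP.
rewrite /bil mxE (bigD1_ord N) //= yrfN mxE expr2 addrC; congr (_ + _).
under eq_bigr do rewrite yrf mxE mulr_suml.
rewrite exchange_big /=; apply: eq_bigr => a _; apply: eq_bigr => b _; ring.
Qed.

Lemma hh_sqr : h ^+ 2 = 1 - g ^+ 2 / 4.
Proof. by rewrite /hh sqr_sqrtr //; case/andP: g_bound => *; nra. Qed.

Lemma g_sqr : g ^+ 2 = 4 * (1 - h ^+ 2).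
Proof. by rewrite hh_sqr; field. Qed.

Lemma hh_gt0 : 0 < h.
Proof. by rewrite /hh sqrtr_gt0; case/andP: g_bound => *; nra. Qed.

Lemma hh_neq0 : h != 0.
Proof. by rewrite gt_eqF // hh_gt0. Qed.

(* A rational parametrisation of the circle [h^2 + (g/2)^2 = 1], which lets
   [field] see the algebraic relation between [h] and [g]. *)
Lemma hh_param : exists s : R,
  [/\ h = (1 - s ^+ 2) / (1 + s ^+ 2), g = 4 * s / (1 + s ^+ 2),
      1 - s ^+ 2 != 0 & 1 + s ^+ 2 != 0].
Proof.
have h0 := hh_gt0; have h2 := hh_sqr.
have h1 : 1 + h != 0 by rewrite gt_eqF //; lra.
have g2 : g ^+ 2 = 4 * (1 - h) * (1 + h).
  by rewrite -mulrA -subr_sqr expr1n h2; field.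
pose s := g / (2 * (1 + h)).
have s2 : s ^+ 2 = (1 - h) / (1 + h) by rewrite /s expr_div_n g2; field; rewrite h1.
have s1 : 1 + s ^+ 2 != 0 by rewrite gt_eqF // ltr_wpDr ?sqr_ge0 // ltr01.
exists s; split => //.
- by rewrite s2; field; rewrite h1 /=; apply/eqP => E; move: h0; lra.
- move: s1; rewrite s2 /s => s1; field; rewrite h1 /=.
  by apply/eqP => E; move: h0; lra.
- have -> : 1 - s ^+ 2 = 2 * h / (1 + h) by rewrite s2; field.
  by rewrite mulf_neq0 ?invr_eq0 // mulf_neq0 // gt_eqF.
Qed.

Lemma BB_hA y : B y = h ^+ 2 * q y ^+ 2 + A y ^+ 2.
Proof. by rewrite /BB /AA hh_sqr; field. Qed.

Lemma BB_ge0 y : 0 <= B y.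
Proof. by rewrite BB_hA; apply: addr_ge0; [apply: mulr_ge0|]; apply: sqr_ge0. Qed.

Lemma BB_gt0 y : 0 < q y -> 0 < B y.
Proof.
by move=> qy; rewrite BB_hA ltr_wpDr ?sqr_ge0 // mulr_gt0 // exprn_gt0 // hh_gt0.
Qed.

Lemma KK_sqr y : K y ^+ 2 = B y * J y ^+ 2.
Proof. by rewrite /KK exprMn sqr_sqrtr // BB_ge0. Qed.

(* Gradients are taken with respect to [bil rf]: the derivative of f at y in
   direction v is [bil rf (grad_f y) v]. *)
Definition spatial (y : V) : V := y - y 0 N *: e.
Definition grad_q (y : V) : V := (q y)^-1 *: spatial y.
Definition grad_A (y : V) : V := e + (g / 2) *: grad_q y.
Definition grad_Phi (y : V) : V := (h / B y) *: (q y *: e - y 0 N *: grad_q y).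
Definition grad_J (y : V) : V := (GG g * J y / 2) *: grad_Phi y.

Lemma bil_spatial y v : bil rf (spatial y) v = bil rf y v - y 0 N * v 0 N.
Proof. by rewrite /spatial bilDl -scaleNr bilZl bil_rfull_el mulNr. Qed.

Lemma bil_grad_q y v : bil rf (grad_q y) v = bil rf (spatial y) v / q y.
Proof. by rewrite /grad_q bilZl mulrC. Qed.

Lemma bil_grad_A y v : bil rf (grad_A y) v = v 0 N + g / 2 * bil rf (grad_q y) v.
Proof. by rewrite /grad_A bilDl bilZl bil_rfull_el. Qed.

Lemma bil_grad_Phi y v :
  bil rf (grad_Phi y) v = h / B y * (q y * v 0 N - y 0 N * bil rf (grad_q y) v).
Proof.
by rewrite /grad_Phi bilZl bilDl -scaleNr !bilZl bil_rfull_el mulNr.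
Qed.

Lemma bil_grad_J y v : bil rf (grad_J y) v = GG g * J y / 2 * bil rf (grad_Phi y) v.
Proof. by rewrite /grad_J bilZl. Qed.

Lemma is_derive_coord k y v : is_derive y v (fun z : V => z 0 k) (v 0 k).
Proof. by apply: is_derive_linear => a u w; rewrite !mxE. Qed.

Lemma is_derive_bil_l w y v : is_derive y v (fun z => bil rf z w) (bil rf v w).
Proof. by apply: is_derive_linear => a u u'; rewrite bilDZl. Qed.

Definition metric_form (y v w : V) : R :=
  J y ^+ 2 * (bil rf v w + g * bil rf (grad_q y) v * w 0 N)
  + 2 * J y * bil rf (grad_J y) v * (bil rf y w + g * q y * w 0 N).

Section Derivatives.
Variables (y v : V).
Hypothesis q_gt0 : 0 < q y.

Let q_neq0 : q y != 0. Proof. by rewrite gt_eqF. Qed.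
Let B_neq0 : B y != 0. Proof. by rewrite gt_eqF // BB_gt0. Qed.

Lemma is_derive_qq : is_derive y v q (bil rf (grad_q y) v).
Proof.
have -> : q = fun z => Num.sqrt (bil rf z z - z 0 N ^+ 2).
  by apply/funext => z; rewrite qq_bil.
have Q_gt0 : 0 < bil rf y y - y 0 N ^+ 2 by rewrite -sqrtr_gt0 -qq_bil.
have dZ := is_derive_coord N y v.
apply: is_derive_eq (is_derive_chain (is_deriveB (is_derive_quadratic _ _ (bilDZl rf)
  (bilDZr rf)) (is_derive_mul dZ dZ)) (is_derive1_sqrt Q_gt0)) _.
rewrite -qq_bil bil_grad_q bil_spatial [bil rf v y]bil_rfullC /GRing.scale /=.
by field.
Qed.

Lemma is_derive_AA : is_derive y v A (bil rf (grad_A y) v).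
Proof.
rewrite /AA /Zc.
apply: is_derive_eq (is_deriveD (is_derive_coord N y v)
  (is_derive_mul (is_derive_mul (is_derive_const g y v) is_derive_qq)
  (is_derive_const 2^-1 y v))) _.
by rewrite bil_grad_A /=; field.
Qed.

Lemma is_derive_PhiF : is_derive y v (PhiF r g) (bil rf (grad_Phi y) v).
Proof.
have hq_neq0 : h * q y != 0 by rewrite mulf_neq0 ?hh_neq0.
have dPh := is_derive_chain (is_derive_mul is_derive_AA
  (is_derive_inv (is_derive_mul (is_derive_const h y v) is_derive_qq) hq_neq0))
  (is_derive1_atan _).
apply: is_derive_eq (is_derive_near_line _ dPh) _.
  apply: filterS (is_derive_gt0_near_line is_derive_qq q_gt0) => t qt.
  by rewrite /PhiF qt.
rewrite bil_grad_Phi bil_grad_A /=.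
have := BB_gt0 q_gt0; rewrite BB_hA /AA /Zc => B_gt0.
field; rewrite q_neq0 hh_neq0 !andbT.
by apply/eqP => E; move: B_gt0; nra.
Qed.

Lemma is_derive_JJ : is_derive y v J (bil rf (grad_J y) v).
Proof.
apply: is_derive_eq (is_derive_chain (is_derive_mul (is_derive_mul
  (is_derive_const (GG g) y v) is_derive_PhiF) (is_derive_const 2^-1 y v))
  (is_derive_expR _)) _.
by rewrite bil_grad_J /JJ /=; field.
Qed.

Lemma is_derive_KK_sqr :
  is_derive y v (fun z => K z ^+ 2) (2 * J y ^+ 2 * (bil rf y v + g * q y * v 0 N)).
Proof.
have -> : (fun z => K z ^+ 2) =
    (fun z => (z 0 N * z 0 N + g * q z * z 0 N + q z * q z) * (J z * J z)).
  by apply/funext => z; rewrite KK_sqr /BB /Zc !expr2.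
have dZ := is_derive_coord N y v; have dq := is_derive_qq; have dJ := is_derive_JJ.
apply: is_derive_eq (is_derive_mul (is_deriveD (is_deriveD (is_derive_mul dZ dZ)
  (is_derive_mul (is_derive_mul (is_derive_const g y v) dq) dZ)) (is_derive_mul dq dq))
  (is_derive_mul dJ dJ)) _.
rewrite bil_grad_J bil_grad_Phi bil_grad_q bil_spatial /GG /=.
move: B_neq0; rewrite /BB /Zc => B0.
by rewrite !fctE /=; field; rewrite q_neq0 B0 hh_neq0.
Qed.

Lemma is_derive_sigma k : is_derive y v (fun z => sigma r g z 0 k)
  (if k == N then A y * bil rf (grad_J y) v + J y * bil rf (grad_A y) v
   else h * (y 0 k * bil rf (grad_J y) v + J y * v 0 k)).
Proof.
rewrite /sigma; under [fun z => _]funext do rewrite mxE.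
case: (k == N).
  exact: is_derive_mul is_derive_AA is_derive_JJ.
apply: is_derive_eq (is_derive_mul (is_derive_mul (is_derive_const h y v)
  (is_derive_coord k y v)) is_derive_JJ) _.
by rewrite /=; ring.
Qed.

End Derivatives.

Lemma is_derive_pd_KK_sqr y v k : 0 < q y ->
  is_derive y v (pd (fun z => K z ^+ 2) k) (2 * metric_form y v (delta_mx 0 k)).
Proof.
move=> q_gt0; set w : V := delta_mx 0 k.
have dgrad : is_derive y v (fun z => 2 * (J z * J z) * (bil rf z w + g * q z * w 0 N))
    (2 * metric_form y v w).
  have dJ := is_derive_JJ v q_gt0.
  apply: is_derive_eq (is_derive_mul (is_derive_mul (is_derive_const 2 y v)
    (is_derive_mul dJ dJ)) (is_deriveD (is_derive_bil_l w y v)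
    (is_derive_mul (is_derive_mul (is_derive_const g y v) (is_derive_qq v q_gt0))
    (is_derive_const (w 0 N) y v)))) _.
  by rewrite /metric_form !fctE /=; ring.
apply: is_derive_near_line dgrad.
apply: filterS (is_derive_gt0_near_line (is_derive_qq v q_gt0) q_gt0) => t qt.
by rewrite /pd; case: (is_derive_KK_sqr w qt) => _ ->; rewrite expr2.
Qed.

Lemma gmetE x i j : 0 < q x ->
  gmet r g x i j = metric_form x (delta_mx 0 i) (delta_mx 0 j).
Proof.
move=> qx; rewrite /gmet mxE {1}/pd.
by case: (is_derive_pd_KK_sqr (delta_mx 0 i) j qx) => _ ->; rewrite mulrC mulKf.
Qed.

Lemma sigJacE x k i : 0 < q x -> sigJac r g x k i =
  (if k == N then A x * bil rf (grad_J x) (delta_mx 0 i) + J x * bil rf (grad_A x) (delta_mx 0 i)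
   else h * (x 0 k * bil rf (grad_J x) (delta_mx 0 i) + J x * (delta_mx 0 i : V) 0 k)).
Proof. by move=> qx; rewrite /sigJac mxE /pd; case: (is_derive_sigma (delta_mx 0 i) qx k). Qed.

Section AtPoint.
Variable x : V.
Hypothesis q_gt0 : 0 < q x.

Local Notation Y := (spatial x).
Local Notation Z := (x 0 N).

Let q_neq0 : q x != 0. Proof. by rewrite gt_eqF. Qed.
Let B_neq0 : B x != 0. Proof. by rewrite gt_eqF // BB_gt0. Qed.
Let J_neq0 : J x != 0. Proof. by rewrite gt_eqF // expR_gt0. Qed.
Let sqrtB_neq0 : Num.sqrt (B x) != 0. Proof. by rewrite gt_eqF // sqrtr_gt0 BB_gt0. Qed.

Lemma spatial_N : Y 0 N = 0.
Proof. by rewrite !mxE !eqxx mulr1 subrr. Qed.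

Lemma bil_spatial_spatial : bil rf Y Y = q x ^+ 2.
Proof.
rewrite bil_spatial spatial_N mulr0 subr0 bil_rfullC bil_spatial qq_bil sqr_sqrtr ?expr2 //.
by apply: ltW; rewrite -sqrtr_gt0 -qq_bil.
Qed.

Lemma bil_x w : bil rf x w = bil rf Y w + Z * w 0 N.
Proof. by rewrite bil_spatial subrK. Qed.

Lemma sigma_decomp : sigma r g x = (h * J x) *: Y + (A x * J x) *: e.
Proof.
apply/rowP => k; rewrite !mxE; case: (eqVneq k N) => [->|kN].
  by rewrite !eqxx /=; ring.
by rewrite andbF /=; ring.
Qed.

Lemma sigma_N : sigma r g x 0 N = A x * J x.
Proof. by rewrite mxE eqxx. Qed.

Lemma bil_sigma u : bil rf (sigma r g x) u = h * J x * bil rf Y u + A x * J x * bil rf e u.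
Proof. by rewrite sigma_decomp bilDl !bilZl. Qed.

Lemma bil_sigma_sigma : bil rf (sigma r g x) (sigma r g x) = J x ^+ 2 * B x.
Proof.
rewrite bil_sigma bil_rfull_el sigma_N bil_rfullC bil_sigma bil_spatial_spatial.
rewrite bil_rfull_el spatial_N BB_hA.
ring.
Qed.

Lemma Lup_decomp : Lup r g x = (J x * Num.sqrt (B x))^-1 *: sigma r g x.
Proof.
rewrite /Lup /St -/(bil rf _ _) bil_sigma_sigma sqrtrM ?sqr_ge0 // sqrtr_sqr.
by rewrite ger0_norm // ltW // expR_gt0.
Qed.

Lemma Llow_mulmx_Lup : Llow r g x *m (Lup r g x)^T = 1%:M.
Proof.
rewrite /Llow mx11_bil Lup_decomp bilZl bilZr bil_sigma_sigma.
have -> : J x ^+ 2 * B x = (J x * Num.sqrt (B x)) ^+ 2.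
  by rewrite exprMn sqr_sqrtr ?BB_ge0.
by congr (_%:M); field; rewrite sqrtB_neq0 J_neq0.
Qed.

Definition nlow : 'M[R]_n.+1 :=
  (h ^+ 2)^-1 *: rf - (GG g ^+ 2 / 4) *: ((Llow r g x)^T *m Llow r g x).

Lemma bil_nlow u w : bil nlow u w = (h ^+ 2)^-1 * bil rf u w
  - GG g ^+ 2 / 4 * (bil rf (sigma r g x) u * bil rf (sigma r g x) w) / (J x ^+ 2 * B x).
Proof.
rewrite /nlow /Llow bil_scalemxB bil_outer ?rfull_tr // !Lup_decomp !bilZl.
have -> : J x ^+ 2 * B x = (J x * Num.sqrt (B x)) ^+ 2.
  by rewrite exprMn sqr_sqrtr ?BB_ge0.
by field; rewrite sqrtB_neq0 J_neq0 hh_neq0.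
Qed.

(* Not quite the gradient of [sigma^N = A J]: its [h J e] part is the diagonal
   entry already counted in the scalar term of [sigJac_decomp]. *)
Definition grad_sigmaN : V := A x *: grad_J x + J x *: grad_A x - (h * J x) *: e.

Lemma bil_grad_sigmaN v :
  bil rf grad_sigmaN v = A x * bil rf (grad_J x) v + J x * bil rf (grad_A x) v - h * J x * v 0 N.
Proof.
rewrite /grad_sigmaN; move: (grad_J x) (grad_A x) => gJ gA.
by rewrite -scaleNr !bilDl !bilZl bil_rfull_el mulNr.
Qed.

Lemma sigJac_decomp : sigJac r g x =
  (h * J x)%:M + Y^T *m ((h *: grad_J x) *m rf) + e^T *m (grad_sigmaN *m rf).
Proof.
apply/matrixP => k i; rewrite sigJacE //.
set W1 := (h *: grad_J x) *m rf; set W2 := grad_sigmaN *m rf.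
have -> : ((h * J x)%:M + Y^T *m W1 + e^T *m W2) k i =
    (h * J x)%:M k i + (Y^T *m W1) k i + (e^T *m W2) k i by rewrite !mxE.
rewrite !mul_tr_row_entry /W1 /W2 -!bil_deltar (bilZl _ h) bil_grad_sigmaN.
rewrite !mxE eqxx -mulr_natr /=.
by case: (eqVneq k N) => [->|kN]; rewrite /=; ring.
Qed.

Lemma mulmx_sigJac_tr v : v *m (sigJac r g x)^T =
  (h * J x) *: v + (h * bil rf (grad_J x) v) *: Y + bil rf grad_sigmaN v *: e.
Proof.
rewrite sigJac_decomp; move: (spatial x) => y.
rewrite !linearD /= tr_scalar_mx !trmx_mul !trmxK rfull_tr mul_mx_scalar.
rewrite !mulmxA !mulmx_bil_scale bilZr.
by rewrite (bil_rfullC v) (bil_rfullC v).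
Qed.

Lemma gmet_factor : gmet r g x = (sigJac r g x)^T *m nlow *m sigJac r g x.
Proof.
apply/matrixP => i j.
rewrite gmetE // bil_congruence !mulmx_sigJac_tr !bil_nlow !bil_sigma /metric_form.
rewrite bil_x !bil_grad_sigmaN !bil_grad_J !bil_grad_Phi !bil_grad_A !bil_grad_q.
move: bil_spatial_spatial spatial_N; move: (spatial x) => y yy yN.
rewrite !(bilDl, bilDr, bilZl, bilZr) !bil_rfull_el !bil_rfull_er yN yy.
rewrite [bil rf (delta_mx 0 i) y]bil_rfullC !mxE !eqxx /=.
move: B_neq0 J_neq0; move: (J x) => Jx; rewrite /GG /AA /BB /Zc.
have [s [-> -> s1 s2]] := hh_param => B0 J0.
have B1 : Z ^+ 2 * (1 + s ^+ 2) + 4 * s * q x * Z + q x ^+ 2 * (1 + s ^+ 2) != 0.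
  have -> : Z ^+ 2 * (1 + s ^+ 2) + 4 * s * q x * Z + q x ^+ 2 * (1 + s ^+ 2) =
    (1 + s ^+ 2) * (Z ^+ 2 + 4 * s / (1 + s ^+ 2) * q x * Z + q x ^+ 2) by field.
  by rewrite mulf_neq0.
by field; rewrite s1 s2 B1 J0 q_neq0.
Qed.

Lemma det_sigJac : \det (sigJac r g x) = h ^+ n * J x ^+ n.+1.
Proof.
have c0 : h * J x != 0 by rewrite mulf_neq0 ?hh_neq0.
set U := row_mx Y^T e^T; set W := col_mx ((h *: grad_J x) *m rf) (grad_sigmaN *m rf).
have JE : sigJac r g x = (h * J x)%:M + U *m W.
  by rewrite mul_row_col addrA sigJac_decomp.
have := det_scalar_addmulmxC U W c0.
rewrite -JE mul_col_row !mx11_bil (scalar_mx_block 1 1) add_block_mx !add0r.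
rewrite det_block_mx11 !mxE !eqxx !mulr1n !(bilZl _ h) !bil_grad_sigmaN !bil_grad_J.
rewrite !bil_grad_Phi !bil_grad_A !bil_grad_q bil_spatial_spatial !bil_rfull_er spatial_N.
rewrite !mxE !eqxx /= => E.
apply: (mulIf (expf_neq0 2 c0)); rewrite E [_ ^+ n.+1]exprS [J x ^+ n.+1]exprS exprMn.
move: B_neq0; rewrite /GG /AA /BB /Zc => B0.
by field; rewrite B0 hh_neq0 q_neq0.
Qed.

Lemma nlow_mulmx : rf \in unitmx ->
  nlow *m (h ^+ 2 *: invmx rf + (g ^+ 2 / 4) *: ((Lup r g x)^T *m Lup r g x)) = 1%:M.
Proof.
move=> rf_unit; set L := Lup r g x; set c := g ^+ 2 / (4 * h ^+ 2).
have h2 : h ^+ 2 != 0 by rewrite expf_neq0 ?hh_neq0.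
have c1 : 1 + c = (h ^+ 2)^-1 by rewrite /c g_sqr; field; rewrite hh_neq0.
have -> : nlow = (h ^+ 2)^-1 *: (rf - (c / (1 + c)) *: ((L *m rf)^T *m (L *m rf))).
  by rewrite /nlow scalerBr scalerA c1 /c /GG; congr (_ - _ *: _); field; rewrite hh_neq0.
have -> : h ^+ 2 *: invmx rf + (g ^+ 2 / 4) *: (L^T *m L) =
    h ^+ 2 *: (invmx rf + c *: (L^T *m L)).
  by rewrite scalerDr scalerA /c; congr (_ + _ *: _); field; rewrite hh_neq0.
rewrite -scalemxAl -scalemxAr scalerA mulVf // scale1r.
apply: sherman_morrison_sym => //; first exact: rfull_tr.
  exact: Llow_mulmx_Lup.
by rewrite c1 invr_eq0.
Qed.

Lemma det_nlow : \det nlow = h ^- (2 * n) * \det r.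
Proof.
set c := (h ^+ 2)^-1; set a := GG g ^+ 2 / 4.
have c0 : c != 0 by rewrite invr_eq0 expf_neq0 ?hh_neq0.
have ca : c - a = 1 by rewrite /c /a /GG expr_div_n g_sqr; field; rewrite hh_neq0.
have -> : nlow = rf *m (c%:M + (- a *: (Lup r g x)^T) *m Llow r g x).
  have rfLT : rf *m (Lup r g x)^T = (Llow r g x)^T by rewrite /Llow trmx_mul rfull_tr.
  by rewrite mulmxDr mul_mx_scalar mulmxA -scalemxAr -scalemxAl rfLT scaleNr.
rewrite det_mulmx det_rfull mulrC; congr (_ * _).
have := det_scalar_addmulmxC (- a *: (Lup r g x)^T) (Llow r g x) c0.
rewrite -scalemxAr Llow_mulmx_Lup scalemx1 -raddfD /= det_scalar1 ca mul1r expr1 exprS.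
by rewrite [RHS]mulrC => /(mulIf c0) ->; rewrite exprVn -exprM.
Qed.

End AtPoint.

End Finsleroid.

Unset Implicit Arguments.

Theorem theorem2p15 (R : realType) (n : nat) (r : 'M[R]_n) (g : R)
  (x : 'rV[R]_n.+1) :
  (0 < n)%N ->
  r^T = r ->
  (forall v : 'rV[R]_n, v != 0 -> 0 < (v *m r *m v^T) 0 0) ->
  -2 < g < 2 ->
  0 < qq r x ->
  [/\ nup r g x = hh g ^+ 2 *: invmx (rfull r)
                  + (g ^+ 2 / 4) *: ((Lup r g x)^T *m Lup r g x),
      nup r g x \in unitmx,
      invmx (nup r g x) = (hh g ^+ 2)^-1 *: rfull r
                  - (GG g ^+ 2 / 4) *: ((Llow r g x)^T *m Llow r g x)
    & \det (invmx (nup r g x)) = hh g ^- (2 * n) * \det r].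
Proof.
move=> _ r_sym r_pos g_bound q_gt0.
have rf_unit : rfull r \in unitmx.
  by rewrite unitmxE det_rfull unitfE posdef_det_neq0.
have Jac_unit : sigJac r g x \in unitmx.
  rewrite unitmxE unitfE det_sigJac // mulf_neq0 // expf_neq0 ?gt_eqF //.
  - exact: hh_gt0.
  - exact: expR_gt0.
have NC := nlow_mulmx r_sym g_bound q_gt0 rf_unit.
have [n_unit _] := mulmx1_unit NC.
have nupE : nup r g x = invmx (nlow r g x).
  by rewrite /nup /ginv gmet_factor // invmx_congruence.
split.
- by rewrite nupE -[LHS]mulmx1 -NC mulKmx.
- by rewrite nupE unitmx_inv.
- by rewrite nupE invmxK.
- by rewrite nupE invmxK det_nlow.
Qed.
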